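(* Let $N$ be a Poisson process on $[0,\infty)$ with intensity $\lambda>0$, with points $0<X_1<X_2<\cdots$, and for $\epsilon>0$ let $\beta_0(x)=\beta_0^{(\epsilon)}(x)$ be the number of complete clusters in $[0,x]$ for connection threshold $\epsilon$. Let $m$ be a positive integer and $x>0$. Then $\mathbb{E}[\beta_0(x)^m]\to\mathbb{E}[N_x^m]$ as $\epsilon\to0$.
   Context: $N_x=\#\{n\ge1:X_n\le x\}$. A cluster (for threshold $\epsilon$) is a maximal set of consecutive points $X_j,\dots,X_k$ with $X_{l+1}-X_l\le\epsilon$ for $j\le l<k$; its end is $X_k+\epsilon$. $\beta_0(x)$ is the number of clusters whose end is $\le x$. *)

From HB Require Import structures.
From mathcomp Require Import all_boot all_order all_algebra.
From mathcomp Require Import all_classical all_reals all_analysis.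
Set Implicit Arguments. Unset Strict Implicit. Unset Printing Implicit Defensive.
Import Order.TTheory GRing.Theory Num.Theory.
Import numFieldNormedType.Exports.
Local Open Scope classical_set_scope.
Local Open Scope ring_scope.

Section poisson_defs.
Context {d : measure_display} {T : measurableType d} {R : realType}.

(* Points are 0-indexed: [X n] is the paper's X_{n+1}. *)

Definition gap (X : nat -> T -> R) (n : nat) (w : T) : R :=
  if n is k.+1 then X k.+1 w - X k w else X 0%N w.

Definition mutually_independent (P : probability T R) (Y : nat -> T -> R) :=
  forall (s : seq nat) (B : nat -> set R), uniq s ->
    (forall i, measurable (B i)) ->
    P (\big[setI/setT]_(i <- s) (Y i @^-1` B i)) =
    (\prod_(i <- s) P (Y i @^-1` B i))%E.

(* X is (the sequence of points of) a homogeneous Poisson process on [0,oo)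
   with intensity lam: the inter-arrival times are i.i.d. Exp(lam). *)
Definition poisson_process (P : probability T R) (lam : R) (X : nat -> T -> R) :=
  [/\ forall n, measurable_fun setT (X n),
      mutually_independent P (gap X) &
      forall n (A : set R), measurable A ->
        P (gap X n @^-1` A) = exponential_prob lam A].

Definition count_pts (X : nat -> T -> R) (x : R) (w : T) : \bar R :=
  (\sum_(0 <= n <oo) (((X n w <= x)%R)%:R)%:E)%E.

(* beta_0(x): number of clusters (threshold eps) whose end is <= x.
   Each cluster is identified by its last point X_k, characterised by
   X_{k+1} - X_k > eps; its end is X_k + eps. *)
Definition beta0 (eps : R) (X : nat -> T -> R) (x : R) (w : T) : \bar R :=
  (\sum_(0 <= n <oo) ((((eps < X n.+1 w - X n w) && (X n w + eps <= x))%R)%:R)%:E)%E.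

End poisson_defs.

From HB Require Import structures.
From mathcomp Require Import all_boot all_order all_algebra.
From mathcomp Require Import all_classical all_reals all_analysis.
Import Order.TTheory GRing.Theory Num.Theory.
Import numFieldNormedType.Exports.
Local Open Scope classical_set_scope.
Local Open Scope ring_scope.
From mathcomp Require Import measurable_realfun exponential_distribution ring.
Set Implicit Arguments. Unset Strict Implicit. Unset Printing Implicit Defensive.
Local Open Scope ereal_scope.

(* As eps decreases to 0, beta_0(x) increases, and every point X_n <= x
   eventually becomes the last point of a complete cluster, provided the next
   gap is positive and X_n <> x.  These two conditions fail only on a null
   set: gaps are exponential, and X_{n+1} = X_n + (an independent exponential
   gap) has no atom.  Hence beta_0(x)^m increases almost surely to N_x^m, and
   monotone convergence along eps = 1/(k+1), together with the monotonicity
   of E[beta_0(x)^m] in eps, gives the limit. *)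

Section ereal_sequences.
Context {R : realType}.
Implicit Types (u : (\bar R)^nat) (l : \bar R).

Lemma lee_expe2r (a b : \bar R) n : 0 <= a -> a <= b -> a ^+ n <= b ^+ n.
Proof.
move=> a0 ab; elim: n => [|n IH]; first by rewrite !expe0.
by rewrite !expeS lee_pmul// expe_ge0.
Qed.

Lemma nondecreasing_cvge_le u l n :
  nondecreasing_seq u -> u @ \oo --> l -> u n <= l.
Proof. by move=> nd ul; apply: (cvge_ge _ ul); exists n => // k /= /nd. Qed.

Lemma nondecreasing_cvge_expe u l m :
  (forall n, 0 <= u n) -> nondecreasing_seq u -> u @ \oo --> l ->
  (fun n => u n ^+ m) @ \oo --> l ^+ m.
Proof.
move=> u0 nd ul.
have [l0|l_neq0] := eqVneq l 0.
  subst l; have u_eq0 n : u n = 0.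
    by apply/eqP; rewrite eq_le u0 andbT; exact: nondecreasing_cvge_le nd ul.
  by under eq_fun do rewrite u_eq0; exact: cvg_cst.
have l_gt0 : 0 < l.
  by rewrite lt0e l_neq0 (le_trans (u0 0%N) (nondecreasing_cvge_le 0 nd ul)).
elim: m => [|m IH]; first exact: cvg_cst.
under eq_fun do rewrite expeS.
by rewrite expeS; apply: cvgeM => //; rewrite neq0_mule_def// gt_eqF// mule_gt0// expe_gt0.
Qed.

Lemma nneseries_cvg_termwise (u : nat -> (\bar R)^nat) (v : (\bar R)^nat) :
  (forall k n, 0 <= u k n) -> (forall n, nondecreasing_seq (u ^~ n)) ->
  (forall k n, u k n <= v n) -> (forall n, \forall k \near \oo, v n <= u k n) ->
  (fun k => \sum_(0 <= n <oo) u k n) @ \oo --> \sum_(0 <= n <oo) v n.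
Proof.
move=> u0 nd_u uv vu.
set S := fun k => \sum_(0 <= n <oo) u k n.
have nd_S : nondecreasing_seq S.
  by move=> i j ij; apply: lee_nneseries => [n _ _|n _]; [exact: u0|exact: nd_u].
have cvg_S := ereal_nondecreasing_is_cvgn nd_S.
suff <- : lim (S @ \oo) = \sum_(0 <= n <oo) v n by exact: cvg_S.
apply/eqP; rewrite eq_le; apply/andP; split.
  apply: lime_le => //; apply: nearW => k.
  by apply: lee_nneseries => [n _ _|n _]; [exact: u0|exact: uv].
have partial_le N : \forall k \near \oo,
    \sum_(0 <= n < N) v n <= \sum_(0 <= n < N) u k n.
  elim: N => [|N IH]; first by apply: nearW => k; rewrite !big_geq.
  near=> k; rewrite !big_nat_recr//=; apply: leeD; near: k; [exact: IH|exact: vu].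
have v0 n : 0 <= v n by apply: le_trans (uv 0%N n).
apply: lime_le; first by apply: is_cvg_nneseries => n _ _; exact: v0.
apply: nearW => N; have [k _ /(_ k (leqnn k)) vuN] := partial_le N.
apply: (le_trans vuN); apply: (le_trans _ (nondecreasing_cvge_le k nd_S cvg_S)).
by apply: nneseries_lim_ge => n _ _; exact: u0.
Unshelve. all: by end_near.
Qed.

Lemma nonincreasing_cvge_at_right0 (f : R -> \bar R) l :
  {in `]0%R, +oo[ &, nonincreasing_fun f} ->
  f (n.+1%:R^-1)%R @[n --> \oo] --> l -> f e @[e --> 0%R^'+] --> l.
Proof.
move=> ni_f fl.
have pos_inv n : (0 < n.+1%:R^-1 :> R)%R by rewrite invr_gt0.
have nd_f : nondecreasing_seq (fun n => f n.+1%:R^-1%R).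
  move=> i j ij; apply: ni_f; rewrite ?in_itv/= ?andbT//.
  by rewrite lef_pV2 ?posrE// ler_nat.
have := @nonincreasing_at_right_cvge R f 0%R (BInfty _ false) isT ni_f.
suff -> : ereal_sup (f @` [set` `]0%R, +oo[]) = l by [].
apply/eqP; rewrite eq_le; apply/andP; split.
  apply: ub_ereal_sup => _ [e + <-]; rewrite /= in_itv/= andbT => e0.
  have [n _ /(_ n (leqnn n)) ne] := near_infty_natSinv_lt (PosNum e0).
  apply: le_trans (nondecreasing_cvge_le n nd_f fl).
  by apply: ni_f; rewrite ?in_itv/= ?andbT// ltW.
apply: (cvge_le _ fl); apply: nearW => n.
by apply: ereal_sup_ubound; exists n.+1%:R^-1%R => //=; rewrite in_itv/= andbT.
Qed.

End ereal_sequences.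

Lemma measurable_expe d (T : measurableType d) (R : realType) (f : T -> \bar R) m :
  measurable_fun setT f -> measurable_fun setT (fun w => f w ^+ m).
Proof.
move=> mf; elim: m => [|m IH]; first exact: measurable_cst.
by under eq_fun do rewrite expeS; exact: emeasurable_funM.
Qed.

Lemma lee_bool_natr (R : realType) (b c : bool) :
  (b -> c) -> ((b%:R)%:E : \bar R) <= (c%:R)%:E.
Proof. by case: b; case: c => // /(_ isT). Qed.

Section cluster_count.
Context {d : measure_display} {T : measurableType d} {R : realType}.
Variables (X : nat -> T -> R) (x : R).

Definition closes_cluster (eps : R) n w : bool :=
  ((eps < X n.+1 w - X n w) && (X n w + eps <= x))%R.

Lemma closes_cluster_anti e1 e2 n w : (e1 <= e2)%R ->
  closes_cluster e2 n w -> closes_cluster e1 n w.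
Proof.
move=> e12 /andP[gap_gt Xe2_le].
by rewrite /closes_cluster (le_lt_trans e12 gap_gt) (le_trans _ Xe2_le)// lerD2l.
Qed.

Lemma beta0_ge0 eps w : 0 <= beta0 eps X x w.
Proof. by apply: nneseries_ge0 => n _ _; rewrite lee_fin. Qed.

Lemma beta0_nonincreasing w :
  {homo (fun e => beta0 e X x w) : e1 e2 / (e1 <= e2)%R >-> e2 <= e1}.
Proof.
move=> e1 e2 e12; apply: lee_nneseries => [n _ _|n _]; first by rewrite lee_fin.
exact/lee_bool_natr/closes_cluster_anti.
Qed.

(* Each point X_n <= x eventually closes a cluster ending by x, once eps is
   below both the gap to X_{n+1} and the room x - X_n. *)
Lemma beta0_cvg_count_pts w :
  (forall n, 0 < X n.+1 w - X n w)%R -> (forall n, X n w != x) ->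
  beta0 (k.+1%:R^-1)%R X x w @[k --> \oo] --> count_pts X x w.
Proof.
move=> gap_gt0 X_neq_x; apply: nneseries_cvg_termwise => [k n|n i j ij|k n|n].
- by rewrite lee_fin.
- by apply/lee_bool_natr/closes_cluster_anti; rewrite lef_pV2 ?posrE// ler_nat.
- by apply: lee_bool_natr => /andP[_]; apply: le_trans; rewrite lerDl.
have [Xn_le|] := boolP (X n w <= x)%R; last first.
  by move=> _; apply: nearW => k; rewrite lee_fin.
have room_gt0 : (0 < Num.min (X n.+1 w - X n w) (x - X n w))%R.
  by rewrite lt_min gap_gt0 subr_gt0 lt_neqAle X_neq_x.
near=> k; have : (k.+1%:R^-1 < Num.min (X n.+1 w - X n w) (x - X n w))%R.
  by near: k; exact: (near_infty_natSinv_lt (PosNum room_gt0)).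
rewrite lt_min => /andP[gap_gt room_gt].
by rewrite gap_gt -lerBrDl (ltW room_gt) lee_fin.
Unshelve. all: by end_near.
Qed.

Hypothesis measurable_X : forall n, measurable_fun setT (X n).

Lemma measurable_gap n : measurable_fun setT (gap X n).
Proof. by case: n => [|n] /=; [exact: measurable_X|exact: measurable_funB]. Qed.

Lemma measurable_beta0 eps : measurable_fun setT (beta0 eps X x).
Proof.
have -> : beta0 eps X x =
    (fun w => \sum_(n <oo | n \in xpredT) (((closes_cluster eps n w)%:R)%:E : \bar R)).
  by apply/funext => w; apply: eq_eseriesl.
apply: ge0_emeasurable_sum => [n w _ _|n _]; first by rewrite lee_fin.
apply/measurable_EFinP; apply: (measurableT_comp (f := fun b : bool => b%:R : R)) => //.
apply: measurable_and => /=.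
- exact: (measurable_fun_ltr (f := cst eps) (measurable_cst _) (measurable_gap n.+1)).
- exact: (measurable_fun_ler (g := cst x) (measurable_funD (measurable_X n) (measurable_cst _))).
Qed.

Lemma measurable_count_pts : measurable_fun setT (count_pts X x).
Proof.
have -> : count_pts X x = (fun w => \sum_(n <oo | n \in xpredT)
    ((((X n w <= x)%R)%:R)%:E : \bar R)).
  by apply/funext => w; apply: eq_eseriesl.
apply: ge0_emeasurable_sum => [n w _ _|n _]; first by rewrite lee_fin.
apply/measurable_EFinP; apply: (measurableT_comp (f := fun b : bool => b%:R : R)) => //.
exact: (measurable_fun_ler (g := cst x) (measurable_X n)).
Qed.

End cluster_count.

Section exponential_bounds.
Context {R : realType} (lam : R).
Hypothesis lam_gt0 : (0 < lam)%R.

Lemma exponential_prob_le_lebesgue (A : set R) : measurable A ->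
  exponential_prob lam A <= lam%:E * lebesgue_measure (`[0%R, +oo[ `&` A).
Proof.
move=> mA; rewrite /exponential_prob -integral_indic//.
rewrite -ge0_integralZl_EFin ?(ltW lam_gt0)//; last first.
  by apply/measurable_EFinP; exact: measurable_indic.
apply: ge0_le_integral => //.
- by move=> y _; rewrite lee_fin exponential_pdf_ge0// ltW.
- apply/measurable_EFinP; apply: measurable_funTS.
  exact: measurable_exponential_pdf.
- apply/measurable_EFinP; apply: measurable_funTS.
  by apply: measurable_funM => //; exact: measurable_indic.
move=> y _; rewrite lee_fin indicE.
have [y_ge0|y_lt0] := leP 0%R y; last first.
  by rewrite lt0_exponential_pdf// mulr_ge0// ltW.
rewrite mem_set/= ?in_itv/= ?y_ge0// exponential_pdfE// mulr1.
by rewrite ler_piMr ?(ltW lam_gt0)// expR_le1 mulNr oppr_le0 mulr_ge0// ltW.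
Qed.

Lemma exponential_prob_itv_le (a b : R) : (a < b)%R ->
  exponential_prob lam `[a, b] <= (lam * (b - a))%:E.
Proof.
move=> ab; apply: (le_trans (exponential_prob_le_lebesgue _)) => //.
rewrite EFinM lee_wpmul2l ?lee_fin ?(ltW lam_gt0)//.
apply: (le_trans (le_measure _ _ _ (@subIsetr _ _ _))); rewrite ?inE//.
  exact: measurableI.
have := lebesgue_measure_itv `[a, b]; rewrite /= lte_fin ab => ->.
by rewrite -EFinD.
Qed.

Lemma exponential_prob_null (A : set R) (a : R) : measurable A ->
  `[0%R, +oo[ `&` A `<=` [set a] -> exponential_prob lam A = 0.
Proof.
move=> mA A_sub; apply/eqP; rewrite eq_le; apply/andP; split; last first.
  by apply: integral_ge0 => y _; rewrite lee_fin exponential_pdf_ge0// ltW.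
apply: (le_trans (exponential_prob_le_lebesgue mA)).
suff -> : lebesgue_measure (`[0%R, +oo[ `&` A) = 0 by rewrite mule0.
apply/eqP; rewrite eq_le measure_ge0 andbT -(lebesgue_measure_set1 a).
by apply: le_measure; rewrite ?inE//; exact: measurableI.
Qed.

End exponential_bounds.

Section independence.
Context {d : measure_display} {T : measurableType d} {R : realType}.
Variable P : probability T R.

Lemma setI_closed_sigma_indep (F : set (set T)) (G : set T) :
  setI_closed F -> F `<=` measurable -> measurable G ->
  (forall E, F E -> P (E `&` G) = P E * P G) ->
  forall A, <<s F>> A -> P (A `&` G) = P A * P G.
Proof.
move=> FI Fm mG FG; pose D := [set A | measurable A /\ P (A `&` G) = P A * P G].
suff FD : <<d F>> `<=` D by move=> A; rewrite -setI_closed_g_dynkin_g_sigma_algebra// => /FD[].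
apply: smallest_sub => [|E FE]; last by split; [exact: Fm|exact: FG].
have PG_fin : P G \is a fin_num by rewrite fin_num_measure.
split.
- by split => //; rewrite setTI probability_setT mul1e.
- move=> A [mA AG]; split; first exact: measurableC.
  have -> : P (~` A `&` G) = P G - P (G `&` A).
    by rewrite setIC -setDE measureD// (le_lt_trans (probability_le1 _ _))// ltry.
  by rewrite (setIC G A) AG probability_setC// muleBl ?mul1e.
- move=> A tA /all_and2[mA AG]; split; first exact: bigcup_measurable.
  have mAG k : measurable (A k `&` G) by exact: measurableI.
  rewrite setI_bigcupl (measure_bigcup P _ _ (fun k _ => mAG k)); last exact: trivIset_setIr.
  rewrite (measure_bigcup P _ _ (fun k _ => mA k) tA) -(fineK PG_fin) muleC -nneseriesZl//.
  by apply: eq_eseriesr => k _; rewrite fineK// muleC; exact: AG.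
Qed.

End independence.

Section poisson_gaps.
Context {d : measure_display} {T : measurableType d} {R : realType}.
Variables (P : probability T R) (lam : R) (X : nat -> T -> R).
Hypothesis pp : poisson_process P lam X.

Let measurable_X : forall n, measurable_fun setT (X n).
Proof. by case: pp. Qed.

Let measurable_X_preimage n (A : set R) : measurable A -> measurable (X n @^-1` A).
Proof. by move=> mA; rewrite -[_ @^-1` _]setTI; exact: measurable_X. Qed.

Let measurable_gap_preimage n (A : set R) : measurable A -> measurable (gap X n @^-1` A).
Proof. by move=> mA; rewrite -[_ @^-1` _]setTI; exact: measurable_gap. Qed.

(* A pi-system generating sigma(X_0, ..., X_{n-1}). *)
Definition gap_cylinder n : set (set T) :=
  [set E | exists2 B : nat -> set R, (forall i, measurable (B i)) &
     E = \big[setI/setT]_(0 <= i < n) (gap X i @^-1` B i)].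

Lemma setI_closed_gap_cylinder n : setI_closed (gap_cylinder n).
Proof.
move=> _ _ [B1 mB1 ->] [B2 mB2 ->]; exists (fun i => B1 i `&` B2 i).
  by move=> i; exact: measurableI.
by rewrite -big_split/=; apply: eq_bigr => i _; rewrite preimage_setI.
Qed.

Lemma gap_cylinder_measurable n : gap_cylinder n `<=` measurable.
Proof. by move=> _ [B mB ->]; apply: bigsetI_measurable => i _; exact: measurable_gap_preimage. Qed.

Lemma gap_preimage_cylinder n i (A : set R) : (i < n)%N -> measurable A ->
  gap_cylinder n (gap X i @^-1` A).
Proof.
move=> i_lt_n mA; exists (fun k => if k == i then A else setT) => [k|].
  by case: ifP.
rewrite (bigD1_seq i) ?mem_index_iota ?iota_uniq//= eqxx big1 ?setIT// => k /negbTE ->.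
exact: preimage_setT.
Qed.

Lemma gap_cylinder_indep n E (J : set R) : gap_cylinder n E -> measurable J ->
  P (E `&` gap X n @^-1` J) = P E * P (gap X n @^-1` J).
Proof.
case: pp => _ indep _ [B mB ->] mJ.
pose BJ i := if i == n then J else B i.
have mBJ i : measurable (BJ i) by rewrite /BJ; case: ifP.
have BJ_lt i : (0 <= i < n)%N -> BJ i = B i by case/andP => _ /ltn_eqF; rewrite /BJ => ->.
have cap_BJ : \big[setI/setT]_(0 <= i < n) (gap X i @^-1` BJ i) =
    \big[setI/setT]_(0 <= i < n) (gap X i @^-1` B i).
  by apply: eq_big_nat => i /BJ_lt ->.
have prod_BJ : \prod_(0 <= i < n) P (gap X i @^-1` BJ i) =
    \prod_(0 <= i < n) P (gap X i @^-1` B i).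
  by apply: eq_big_nat => i /BJ_lt ->.
have := indep (index_iota 0 n.+1) BJ (iota_uniq _ _) mBJ.
rewrite !big_nat_recr//= cap_BJ prod_BJ /BJ eqxx => ->.
by rewrite (indep (index_iota 0 n) B (iota_uniq _ _) mB).
Qed.

Lemma measurable_X_gap_cylinder n j : (j < n)%N ->
  measurable_fun (setT : set (g_sigma_algebraType (gap_cylinder n))) (X j).
Proof.
have measurable_gap_i i : (i < n)%N ->
    measurable_fun (setT : set (g_sigma_algebraType (gap_cylinder n))) (gap X i).
  move=> i_lt_n _ A mA; rewrite setTI; apply: sub_gen_smallest.
  exact: gap_preimage_cylinder.
elim: j => [|j IH] j_lt_n; first exact: (measurable_gap_i 0%N j_lt_n).
have -> : X j.+1 = (X j \+ gap X j.+1)%R by apply/funext => w /=; rewrite addrC subrK.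
by apply: measurable_funD; [exact: IH (ltnW j_lt_n)|exact: measurable_gap_i].
Qed.

(* X_n is a function of the gaps before it, hence independent of the next gap. *)
Lemma indep_X_next_gap n (C J : set R) : measurable C -> measurable J ->
  P (X n @^-1` C `&` gap X n.+1 @^-1` J) = P (X n @^-1` C) * P (gap X n.+1 @^-1` J).
Proof.
move=> mC mJ; apply: (setI_closed_sigma_indep (@setI_closed_gap_cylinder n.+1)).
- exact: gap_cylinder_measurable.
- exact: measurable_gap_preimage.
- by move=> E /gap_cylinder_indep; apply.
- by rewrite -[_ @^-1` _]setTI; exact: (measurable_X_gap_cylinder (ltnSn n)).
Qed.

Hypothesis lam_gt0 : (0 < lam)%R.

Definition grid_cell (eta : R) (z : int) : set R :=
  `[(z%:~R * eta)%R, ((z + 1)%:~R * eta)%R[.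

Lemma grid_cellP eta z y : (0 < eta)%R -> grid_cell eta z y <-> Num.floor (y / eta) = z.
Proof.
move=> eta_gt0; rewrite /grid_cell /= in_itv/= -!ler_pdivlMr// -!ltr_pdivrMr//.
by split => [/floor_def //|<-]; rewrite floor_itv.
Qed.

Definition cell_landing (x eta : R) j (z : nat -> int) : set T :=
  \bigcup_k (X j @^-1` grid_cell eta (z k) `&`
    gap X j.+1 @^-1` `[(x - ((z k + 1)%:~R * eta))%R, (x - (z k)%:~R * eta)%R]).

Lemma measurable_cell_landing x eta j z : measurable (cell_landing x eta j z).
Proof.
apply: bigcup_measurable => k _; apply: measurableI.
  by apply: measurable_X_preimage; exact: measurable_itv.
by apply: measurable_gap_preimage; exact: measurable_itv.
Qed.

(* Given the cell of X_j, landing near x needs the independent exponential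
   gap to fall in an interval of length eta. *)
Lemma prob_cell_landing_le x j eta (z : nat -> int) : (0 < eta)%R -> injective z ->
  P (cell_landing x eta j z) <= (lam * eta)%:E.
Proof.
move=> eta_gt0 z_inj; case: pp => _ _ gap_exp.
set C := fun k => X j @^-1` grid_cell eta (z k).
set J := fun k => `[(x - ((z k + 1)%:~R * eta))%R, (x - (z k)%:~R * eta)%R]%classic.
have mC k : measurable (C k) by apply: measurable_X_preimage; exact: measurable_itv.
have mJ k : measurable (gap X j.+1 @^-1` J k).
  by apply: measurable_gap_preimage; exact: measurable_itv.
have tC : trivIset setT C.
  move=> a b _ _ [w [Ca Cb]]; apply: z_inj.
  by rewrite -((grid_cellP _ _ eta_gt0).1 Ca) -((grid_cellP _ _ eta_gt0).1 Cb).
have PJ_le k : P (gap X j.+1 @^-1` J k) <= (lam * eta)%:E.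
  rewrite gap_exp; last exact: measurable_itv.
  apply: le_trans (exponential_prob_itv_le lam_gt0 _) _.
    by rewrite ltrD2l ltrN2 ltr_pM2r// ltr_int ltrDl.
  suff -> : (x - (z k)%:~R * eta - (x - (z k + 1)%:~R * eta) = eta)%R by [].
  by rewrite intrD mulrDl mul1r; ring.
apply: (le_trans (measure_sigma_subadditive P (fun k => measurableI _ _ (mC k) (mJ k))
  (measurable_cell_landing _ _ _ _) (@subset_refl _ _))).
apply: (@le_trans _ _ (\sum_(0 <= k <oo) (lam * eta)%:E * P (C k))).
  apply: lee_nneseries => [k _ _|k _]; first exact: measure_ge0.
  apply: (@le_trans _ _ (P (C k) * P (gap X j.+1 @^-1` J k))).
    rewrite le_eqVlt; apply/orP; left; apply/eqP.
    by apply: indep_X_next_gap; exact: measurable_itv.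
  by rewrite muleC; apply: lee_wpmul2r; [exact: measure_ge0|exact: PJ_le].
rewrite nneseriesZl; last by move=> k _; exact: measure_ge0.
rewrite -[leRHS]mule1 lee_wpmul2l ?lee_fin ?mulr_ge0 ?(ltW lam_gt0) ?(ltW eta_gt0)//.
have <- : P (\bigcup_k C k) = \sum_(0 <= k <oo) P (C k).
  by rewrite (measure_bigcup P _ _ (fun k _ => mC k) tC); apply: eq_eseriesl => k; rewrite in_setT.
by apply: probability_le1; exact: bigcup_measurable.
Qed.

Lemma prob_X_eq_le (x : R) j eta : (0 < eta)%R ->
  P (X j.+1 @^-1` [set x]) <= (2 * lam * eta)%:E.
Proof.
move=> eta_gt0.
have cover : X j.+1 @^-1` [set x] `<=`
    cell_landing x eta j Posz `|` cell_landing x eta j Negz.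
  move=> w /= Xw_eq; set z := Num.floor (X j w / eta).
  have Xw_cell : grid_cell eta z (X j w) by exact/grid_cellP.
  have gap_in : gap X j.+1 w \in `[(x - ((z + 1)%:~R * eta))%R, (x - z%:~R * eta)%R].
    move: Xw_cell; rewrite /grid_cell /= !in_itv/= Xw_eq => /andP[lo hi].
    by rewrite !lerD2l !lerN2 lo ltW.
  by case: z Xw_cell gap_in => k Xw_cell gap_in; [left|right]; exists k.
apply: le_trans (le_measure _ _ _ cover) _; rewrite ?inE//.
- by apply: measurable_X_preimage.
- by apply: measurableU; exact: measurable_cell_landing.
apply: (le_trans (measureU2 _ (measurable_cell_landing _ _ _ _) (measurable_cell_landing _ _ _ _))).
rewrite -mulrA mulr2n mulrDl mul1r EFinD leeD//; apply: prob_cell_landing_le => //.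
- by move=> a b [].
- by move=> a b [].
Qed.

Lemma X_atomless n (x : R) : P (X n @^-1` [set x]) = 0.
Proof.
case: n => [|j].
  case: pp => _ _ gap_exp; rewrite (gap_exp 0%N) //.
  exact: (exponential_prob_null lam_gt0 _ (@subIsetr _ _ _)).
apply/eqP; rewrite eq_le measure_ge0 andbT; apply/lee_addgt0Pr => e e_gt0.
have eta_gt0 : (0 < e / (2 * lam))%R by rewrite divr_gt0// mulr_gt0.
apply: (le_trans (prob_X_eq_le x j eta_gt0)).
by rewrite add0e lee_fin mulrC divfK// gt_eqF// mulr_gt0.
Qed.

Lemma beta0_cvg_count_pts_ae (x : R) :
  {ae P, forall w, beta0 (k.+1%:R^-1)%R X x w @[k --> \oo] --> count_pts X x w}.
Proof.
case: pp => _ _ gap_exp.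
pose N := \bigcup_n (gap X n.+1 @^-1` `]-oo, 0%R] `|` X n @^-1` [set x]).
apply: (@negligibleS _ _ _ P N).
  move=> w /= w_bad; apply: contrapT => w_notin_N; apply: w_bad.
  apply: beta0_cvg_count_pts => n.
    rewrite ltNge; apply/negP => gap_le0; apply: w_notin_N.
    by exists n => //; left; rewrite /= in_itv.
  by apply/eqP => Xn_eq; apply: w_notin_N; exists n => //; right.
have gap_le0 n : P (gap X n.+1 @^-1` `]-oo, 0%R]) = 0.
  rewrite gap_exp; last exact: measurable_itv.
  apply: (exponential_prob_null lam_gt0 (a := 0%R)) => [|y [/=]]; first exact: measurable_itv.
  by rewrite !in_itv/= andbT => y_ge0 y_le0; apply/eqP; rewrite eq_le y_le0.
apply: negligible_bigcup => n; apply: negligibleU; apply/negligibleP.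
- by apply: measurable_gap_preimage; exact: measurable_itv.
- exact: gap_le0.
- exact: measurable_X_preimage.
- exact: X_atomless.
Qed.

End poisson_gaps.

Local Close Scope ereal_scope.

Theorem lemma2 (d : measure_display) (T : measurableType d) (R : realType)
  (P : probability T R) (lam : R) (X : nat -> T -> R) (m : nat) (x : R) :
  0 < lam -> poisson_process P lam X -> (0 < m)%N -> 0 < x ->
  (fun eps : R => (\int[P]_w (beta0 eps X x w ^+ m))%E)
    @ 0^'+ --> (\int[P]_w (count_pts X x w ^+ m))%E.
Proof.
Local Open Scope ereal_scope.
move=> lam_gt0 pp _ _; have [mX _ _] := pp.
have mbeta eps : measurable_fun setT (fun w => beta0 eps X x w ^+ m).
  exact/measurable_expe/measurable_beta0.
have beta_m_ge0 eps w : 0 <= beta0 eps X x w ^+ m by rewrite expe_ge0// beta0_ge0.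
have beta_m_nonincr w e1 e2 : (e1 <= e2)%R -> beta0 e2 X x w ^+ m <= beta0 e1 X x w ^+ m.
  by move=> e12; rewrite lee_expe2r ?beta0_ge0// beta0_nonincreasing.
apply: nonincreasing_cvge_at_right0 => [e1 e2 _ _ e12|].
  by apply: ge0_le_integral => // w _; exact: beta_m_nonincr.
pose g k w := beta0 (k.+1%:R^-1)%R X x w ^+ m.
have nd_g w : nondecreasing_seq (g ^~ w).
  by move=> i j ij; apply: beta_m_nonincr; rewrite lef_pV2 ?posrE// ler_nat.
have lim_g : (fun w => limn (g ^~ w)) = (fun w => count_pts X x w ^+ m) %[ae P].
  apply: filterS (beta0_cvg_count_pts_ae pp lam_gt0 x) => w beta_cvg _.
  apply/cvg_lim => //; apply: nondecreasing_cvge_expe beta_cvg => [k|i j ij].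
    exact: beta0_ge0.
  by apply: beta0_nonincreasing; rewrite lef_pV2 ?posrE// ler_nat.
rewrite -(ae_eq_integral _ _ measurableT _ _ lim_g).
- exact: (@cvg_monotone_convergence d T R P setT measurableT g (fun k => mbeta _)
    (fun k w _ => beta_m_ge0 _ w) (fun w _ => nd_g w)).
- apply: (emeasurable_fun_cvg g) => [k|w _]; first exact: mbeta.
  exact: ereal_nondecreasing_is_cvgn.
- exact/measurable_expe/measurable_count_pts.
Qed.
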